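(* For every $T\in L(W,V)$ with $\mathcal{I}_T=(p_1,\ldots,p_k)$, we have $\dim \mathfrak{I}(T)=\deg \prod_{i=1}^{k}p_i$.
   Context: Let $\mathbb{F}_q$ be the finite field with $q$ elements and let $n\ge k$ be positive integers. Let $V$ be an $n$-dimensional $\mathbb{F}_q$-vector space and $W\subseteq V$ a $k$-dimensional subspace. Fix an ordered basis $\mathcal{B}_1=(v_1,\ldots,v_k)$ of $W$ and extend it to an ordered basis $\mathcal{B}_2=(v_1,\ldots,v_n)$ of $V$. $L(W,V)$ denotes the space of $\mathbb{F}_q$-linear maps $W\to V$. $I_{n,k}\in M_{n,k}(\mathbb{F}_q)$ is the matrix whose $(i,j)$ entry is $1$ if $i=j$ and $0$ otherwise. For a nonzero polynomial matrix $A\in M_{n,k}(\mathbb{F}_q[x])$, its $i$-th determinantal divisor $\delta_i(A)$ is the monic gcd of all $i\times i$ minors of $A$ (with $\delta_0=1$), and its invariant factors are the monic polynomials $p_i=\delta_i(A)/\delta_{i-1}(A)$ (for those $i$ with $\delta_i(A)\neq 0$); they satisfy $p_i\mid p_{i+1}$ and are the diagonal entries of the Smith normal form of $A$. For $T\in L(W,V)$ with matrix $B\in M_{n,k}(\mathbb{F}_q)$ with respect to $\mathcal{B}_1,\mathcal{B}_2$, the matrix $xI_{n,k}-B$ always has $\delta_k\neq 0$, hence exactly $k$ invariant factors $p_1\mid p_2\mid\cdots\mid p_k$; these are called the invariant factors of $T$, and we write $\mathcal{I}_T=(p_1,\ldots,p_k)$. $\mathfrak{I}(T)$ denotes the maximal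 $T$-invariant subspace contained in $W$, i.e. the largest subspace $U\subseteq W$ with $T(U)\subseteq U$. *)

From HB Require Import structures.
From mathcomp Require Import all_boot all_order all_algebra all_field.
Set Implicit Arguments. Unset Strict Implicit. Unset Printing Implicit Defensive.
Import GRing.Theory.
Local Open Scope ring_scope.

(* Coordinates: V = F^n (row vectors, coordinates w.r.t. B2 = (v_1..v_n)),
   W = span(v_1,..,v_k) = row space of pid_mx k : 'M_(k,n).
   T : W -> V has matrix B : 'M_(n,k) w.r.t. B1, B2 (column j = coords of T v_j). *)

Section Defs.
Variable F : finFieldType.

Definition Wmx (n k : nat) : 'M[F]_(k, n) := pid_mx k.

(* T viewed on row coordinate vectors of W inside V: u |-> u *m Tmx;
   u *m I_{n,k} extracts the W-coordinates, then apply B. *)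
Definition Tmx (n k : nat) (B : 'M[F]_(n, k)) : 'M[F]_n :=
  (pid_mx k : 'M[F]_(n, k)) *m B^T.

(* the maximal T-invariant subspace contained in W: the sum of all
   T-invariant subspaces contained in W (F finite, so 'M_n is a finType) *)
Definition maxInv (n k : nat) (B : 'M[F]_(n, k)) : 'M[F]_n :=
  (\sum_(U : 'M[F]_n | (U <= Wmx n k)%MS && (U *m Tmx B <= U)%MS) U)%MS.

Definition charmx (n k : nat) (B : 'M[F]_(n, k)) : 'M[{poly F}]_(n, k) :=
  'X *: (pid_mx k : 'M[{poly F}]_(n, k)) - map_mx polyC B.

Definition monicize (p : {poly F}) : {poly F} := (lead_coef p)^-1 *: p.

Definition incr (i m : nat) (f : {ffun 'I_i -> 'I_m}) : bool :=
  [forall a : 'I_i, forall b : 'I_i, (a < b)%N ==> (f a < f b)%N].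

Definition detdiv (n k : nat) (A : 'M[{poly F}]_(n, k)) (i : nat) : {poly F} :=
  monicize (\big[@gcdp F/0]_(f : {ffun 'I_i -> 'I_n} | incr f)
              \big[@gcdp F/0]_(g : {ffun 'I_i -> 'I_k} | incr g)
                 \det (mxsub f g A)).

Definition invfact (n k : nat) (A : 'M[{poly F}]_(n, k)) (i : nat) : {poly F} :=
  detdiv A i %/ detdiv A i.-1.

End Defs.

(* Express the maximal invariant subspace in W-coordinates as the row space of a
   basis Nb, and complete Nb by E to a basis of F^k.  In that basis the transpose of
   x I_{n,k} - B factors as diag (x - C, 1) * redmx, where C is the matrix of T on the
   invariant subspace, so every k x k minor is char_poly C times the corresponding
   minor of redmx, up to a nonzero constant.  The k x k minors of redmx have no common
   irreducible factor p: a nonzero left-kernel vector of redmx over F[x]/(p) would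
   produce an invariant subspace of W not contained in the maximal one.  Hence
   delta_k is associate to char_poly C, of degree dim I(T), and the product of the
   invariant factors telescopes to delta_k. *)

From HB Require Import structures.
From mathcomp Require Import all_boot all_order all_algebra all_field.
From mathcomp Require Import zify.
From Stdlib Require Import Classical.
Set Implicit Arguments. Unset Strict Implicit. Unset Printing Implicit Defensive.
Import GRing.Theory.
Local Open Scope ring_scope.

Section PolyDivisibility.
Variable F : fieldType.
Implicit Types (p q d : {poly F}).

Lemma big_gcdp_dvd (I : finType) (P : pred I) (G : I -> {poly F}) i :
  P i -> \big[@gcdp F/0]_(j | P j) G j %| G i.
Proof.
rewrite unlock; have : i \in index_enum I by rewrite mem_index_enum.
elim: (index_enum I) => [//|j r IHr]; rewrite inE /= => /orP[/eqP<- Pi | ir Pi].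
  by rewrite Pi dvdp_gcdl.
by case: (P j); [apply: dvdp_trans (dvdp_gcdr _ _) _|]; apply: IHr.
Qed.

Lemma dvdp_big_gcdp (I : finType) (P : pred I) (G : I -> {poly F}) d :
  (forall i, P i -> d %| G i) -> d %| \big[@gcdp F/0]_(j | P j) G j.
Proof.
move=> dG; apply: (big_ind (fun q => d %| q)) => [|p q dp dq|//]; first exact: dvdp0.
by rewrite dvdp_gcd dp.
Qed.

Lemma dvdp_sum (I : Type) (r : seq I) (P : pred I) (G : I -> {poly F}) d :
  (forall i, P i -> d %| G i) -> d %| \sum_(i <- r | P i) G i.
Proof.
move=> dG; apply: (big_ind (fun q => d %| q)) => [|p q|//]; [exact: dvdp0 | exact: dvdp_add].
Qed.

Lemma prod_divp_telescope (P : nat -> {poly F}) k :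
  (forall i, (0 < i <= k)%N -> P i.-1 %| P i) ->
  \prod_(1 <= i < k.+1) (P i %/ P i.-1) * P 0%N = P k.
Proof.
elim: k => [|k IHk] dvP; first by rewrite big_geq // mul1r.
have dvPk : P k %| P k.+1 by apply: (dvP k.+1); rewrite /= leqnn.
rewrite big_nat_recr //= mulrAC IHk ?Pdiv.Field.divpKC //.
by move=> i /andP[i_gt0 lei]; rewrite dvP // i_gt0 ltnW.
Qed.

Lemma monic_irreducible_dvdp q : (1 < size q)%N ->
  exists2 p, monic_irreducible_poly p & p %| q.
Proof.
elim: {q}(size q) {-2}q (leqnn (size q)) => [|s IHs] q; first by rewrite leqn0 => /eqP->.
move=> le_q_s q_gt1; have nz_q : q != 0 by rewrite -size_poly_gt0 ltnW.
have [irr_q | red_q] := classic (irreducible_poly q).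
  have lq_neq0 : (lead_coef q)^-1 != 0 by rewrite invr_eq0 lead_coef_eq0.
  exists ((lead_coef q)^-1 *: q); last by rewrite dvdpZl.
  split; last by rewrite monicE lead_coefZ mulVf ?lead_coef_eq0.
  split=> [|d]; first by rewrite size_scale.
  rewrite dvdpZr // => d_neq1 /(irr_q d d_neq1) /eqp_trans; apply.
  by rewrite eqp_sym eqp_scale.
have [d d_neq1 [dq nqd]] : exists2 d : {poly F}, size d != 1%N & d %| q /\ ~~ (d %= q).
  apply: NNPP => nod; apply: red_q; split=> // d d_neq1 dq.
  by apply: NNPP => nqd; apply: nod; exists d => //; split=> //; apply/negP.
have nz_d : d != 0 by apply: contra_neq nz_q => d0; move: dq; rewrite d0 dvd0p => /eqP.
have lt_dq : (size d < size q)%N by rewrite ltn_neqAle dvdp_size_eqp // nqd dvdp_leq.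
have d_gt1 : (1 < size d)%N by rewrite ltn_neqAle eq_sym d_neq1 size_poly_gt0.
have [|p irr_p pd] := IHs d _ d_gt1; first by rewrite -ltnS (leq_trans lt_dq).
by exists p => //; apply: dvdp_trans dq.
Qed.

End PolyDivisibility.

Lemma incrP (i m : nat) (f : {ffun 'I_i -> 'I_m}) :
  reflect (forall a b : 'I_i, (a < b)%N -> (f a < f b)%N) (incr f).
Proof.
apply: (iffP forallP) => [incr_f a b | incr_f a]; last first.
  by apply/forallP=> b; apply/implyP; apply: incr_f.
by move/forallP/(_ b)/implyP: (incr_f a); apply.
Qed.

Lemma incr_geq (i m : nat) (f : {ffun 'I_i -> 'I_m}) (a : 'I_i) :
  incr f -> (a <= f a)%N.
Proof.
move/incrP=> incr_f; elim: a => a; elim: a => // a IHa a_lt.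
exact: leq_ltn_trans (IHa (ltnW a_lt)) (incr_f (Ordinal (ltnW a_lt)) (Ordinal a_lt) (ltnSn a)).
Qed.

Lemma incr_ord_id (k : nat) (f : {ffun 'I_k -> 'I_k}) (a : 'I_k) : incr f -> f a = a.
Proof.
move=> incr_f; pose g := [ffun b => rev_ord (f (rev_ord b))].
have incr_g : incr g.
  apply/incrP=> b c lt_bc; rewrite !ffunE /= ltn_sub2lE // ltnS.
  by move/incrP: incr_f; apply; rewrite /= ltn_sub2lE // ltnS.
have := incr_geq (rev_ord a) incr_g; rewrite ffunE rev_ordK /= leq_sub2lE //.
by move=> le_fa; apply/val_inj/eqP; rewrite eqn_leq -ltnS le_fa incr_geq.
Qed.

Lemma incr_lift (i m : nat) (f : {ffun 'I_i.+1 -> 'I_m}) (a0 : 'I_i.+1) :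
  incr f -> incr [ffun a : 'I_i => f (lift a0 a)].
Proof.
move/incrP=> incr_f; apply/incrP=> a b lt_ab; rewrite !ffunE incr_f //.
by rewrite /= /bump; case: (leqP a0 a); case: (leqP a0 b) => /=; lia.
Qed.

Lemma row_free_minor_neq0 (K : fieldType) m n (A : 'M[K]_(m, n)) :
  row_free A -> exists2 g : {ffun 'I_m -> 'I_n}, incr g & \det (colsub g A) != 0.
Proof.
rewrite -row_leq_rank -mxrank_tr => fullAt.
have full_At : row_full A^T by rewrite /row_full eqn_leq rank_leq_col.
set f := fullrankfun full_At.
have inj_f : injective f := @fullrankfun_inj _ _ _ _ full_At.
have full_fA : row_full (rowsub f A^T) := fullrowsub_full full_At.
clearbody f.
pose s := [seq j <- enum 'I_n | j \in codom f].
have size_s : size s = m.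
  have uniq_s : uniq s by rewrite filter_uniq // enum_uniq.
  have uniq_f : uniq (codom f) by rewrite map_inj_uniq // enum_uniq.
  have eq_s : s =i codom f by move=> j; rewrite mem_filter mem_enum andbT.
  by rewrite (perm_size (uniq_perm uniq_s uniq_f eq_s)) size_codom card_ord.
have lt_tr : transitive (relpre (@nat_of_ord n) ltn) by move=> ? ? ?; apply: ltn_trans.
have sorted_s : sorted (relpre (@nat_of_ord n) ltn) s.
  by apply: sorted_filter => //; rewrite -sorted_map val_enum_ord iota_ltn_sorted.
pose g := [ffun a : 'I_m => nth (f a) s a].
have incr_g : incr g.
  apply/incrP=> a b lt_ab; rewrite !ffunE (set_nth_default (f a) (f b)) ?size_s //.
  by apply: (sorted_ltn_nth lt_tr _ sorted_s); rewrite ?inE ?size_s.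
exists g => //.
have le_fg : (rowsub f A^T <= rowsub g A^T)%MS.
  apply/row_subP=> a; have : f a \in s by rewrite mem_filter codom_f mem_enum.
  rewrite -index_mem size_s => lt_idx.
  have -> : row a (rowsub f A^T) = row (Ordinal lt_idx) (rowsub g A^T).
    by apply/rowP=> j; rewrite !mxE ffunE nth_index // mem_filter codom_f mem_enum.
  exact: row_sub.
have : row_full (rowsub g A^T).
  by rewrite /row_full eqn_leq rank_leq_col -{1}(eqP full_fA) mxrankS.
rewrite -det_tr row_full_unit unitmxE unitfE.
by have -> : (colsub g A)^T = rowsub g A^T by apply/matrixP=> i j; rewrite !mxE.
Qed.

Section MinorsGcd.
Variable F : fieldType.

Definition minors_gcd n k (A : 'M[{poly F}]_(n, k)) i :=
  \big[@gcdp F/0]_(f : {ffun 'I_i -> 'I_n} | incr f)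
    \big[@gcdp F/0]_(g : {ffun 'I_i -> 'I_k} | incr g) \det (mxsub f g A).

Variables n k : nat.
Implicit Type A : 'M[{poly F}]_(n, k).

Lemma minors_gcd_dvd A i (f : {ffun 'I_i -> 'I_n}) (g : {ffun 'I_i -> 'I_k}) :
  incr f -> incr g -> minors_gcd A i %| \det (mxsub f g A).
Proof.
by move=> incr_f incr_g; apply: dvdp_trans (big_gcdp_dvd _ incr_f) (big_gcdp_dvd _ incr_g).
Qed.

Lemma dvdp_minors_gcd A i d :
  (forall (f : {ffun 'I_i -> 'I_n}) (g : {ffun 'I_i -> 'I_k}),
     incr f -> incr g -> d %| \det (mxsub f g A)) ->
  d %| minors_gcd A i.
Proof. by move=> dA; apply: dvdp_big_gcdp => f incr_f; apply: dvdp_big_gcdp => g; exact: dA. Qed.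

Lemma minors_gcd0 A : minors_gcd A 0 %= 1.
Proof.
rewrite -size_poly_eq1 -dvdp1 -(det_mx00 (mxsub [ffun a => widen_ord (leq0n n) a]
                                                [ffun a => widen_ord (leq0n k) a] A)).
by apply: minors_gcd_dvd; apply/incrP=> -[].
Qed.

(* Laplace expansion along the first row writes every (i+1)-minor as a combination of i-minors. *)
Lemma minors_gcd_dvdS A i : minors_gcd A i %| minors_gcd A i.+1.
Proof.
apply: dvdp_minors_gcd => f g incr_f incr_g.
rewrite (expand_det_row _ ord0); apply: dvdp_sum => j _.
rewrite /cofactor dvdp_mull // dvdp_mull //.
have -> : row' ord0 (col' j (mxsub f g A)) =
    mxsub [ffun a => f (lift ord0 a)] [ffun a => g (lift j a)] A.
  by apply/matrixP=> a b; rewrite !mxE !ffunE.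
by apply: minors_gcd_dvd; apply: incr_lift.
Qed.

End MinorsGcd.

Lemma monicize_eqp (F : finFieldType) (p : {poly F}) : monicize p %= p.
Proof.
have [->|nz_p] := eqVneq p 0; first by rewrite /monicize scaler0 eqpxx.
by rewrite eqp_scale // invr_eq0 lead_coef_eq0.
Qed.

Lemma detdiv_eqp (F : finFieldType) n k (A : 'M[{poly F}]_(n, k)) i :
  detdiv A i %= minors_gcd A i.
Proof. exact: monicize_eqp. Qed.

Lemma mul_pid_mx1 {R : pzRingType} n k : (k <= n)%N ->
  (pid_mx k : 'M[R]_(k, n)) *m (pid_mx k : 'M[R]_(n, k)) = 1%:M.
Proof. by move=> le_kn; rewrite mul_pid_mx minnn (minn_idPr le_kn) pid_mx_1. Qed.

Section MaxInvariantCoordinates.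
Variable F : finFieldType.
Variables n k : nat.
Hypothesis le_kn : (k <= n)%N.
Variable B : 'M[F]_(n, k).

Local Notation J := (pid_mx k : 'M[F]_(k, n)).
Local Notation Jt := (pid_mx k : 'M[F]_(n, k)).

Definition maxInv_coord : 'M[F]_(n, k) := maxInv B *m Jt.

Lemma maxInv_subW : (maxInv B <= J)%MS.
Proof. by apply/sumsmx_subP => U /andP[]. Qed.

Lemma maxInv_coordK : maxInv_coord *m J = maxInv B.
Proof.
rewrite /maxInv_coord; have /submxP[X ->] := maxInv_subW.
by rewrite -!mulmxA (mulmxA J) (mul_pid_mx1 le_kn) mul1mx.
Qed.

Lemma mxrank_maxInv_coord : \rank maxInv_coord = \rank (maxInv B).
Proof.
apply/eqP; rewrite eqn_leq mxrankM_maxl -{1}maxInv_coordK.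
exact: mxrankM_maxl.
Qed.

Lemma maxInv_coord_stable : (maxInv_coord *m B^T <= maxInv_coord *m J)%MS.
Proof.
rewrite maxInv_coordK /maxInv_coord -mulmxA.
rewrite [X in (X *m _ <= _)%MS]/maxInv sumsmxMr; apply/sumsmx_subP => U invU.
by apply: submx_trans (sumsmx_sup U invU _); case/andP: invU.
Qed.

Lemma maxInv_coord_max m (Z : 'M[F]_(m, k)) :
  (Z *m B^T <= Z *m J)%MS -> (Z <= maxInv_coord)%MS.
Proof.
move=> stableZ; rewrite -[Z]mulmx1 -(mul_pid_mx1 le_kn) mulmxA submxMr //.
apply: (sumsmx_sup <<Z *m J>>%MS); last by rewrite genmxE.
rewrite !genmxE submxMl /= (eqmxMr _ (genmxE _)) /Tmx.
by rewrite mulmxA -(mulmxA Z) (mul_pid_mx1 le_kn) mulmx1.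
Qed.

End MaxInvariantCoordinates.

Definition tcharmx (F : fieldType) n k (B : 'M[F]_(n, k)) : 'M[{poly F}]_(k, n) :=
  'X *: map_mx polyC (pid_mx k) - map_mx polyC B^T.

Lemma tr_charmx (F : finFieldType) n k (B : 'M[F]_(n, k)) : (charmx B)^T = tcharmx B.
Proof.
apply/matrixP=> i j; rewrite !mxE.
rewrite [X in X && (i < k)%N]eq_sym.
have [eq_ji|] := eqVneq (nat_of_ord j) (nat_of_ord i); last by rewrite polyC0.
by rewrite eq_ji ltn_ord polyC1.
Qed.

Section StableBlock.
Variable F : fieldType.
Variables n d r : nat.
Variable B : 'M[F]_(n, d + r).
Variables (Nb : 'M[F]_(d, d + r)) (E : 'M[F]_(r, d + r)).
Hypothesis Nb_stable : (Nb *m B^T <= Nb *m pid_mx (d + r))%MS.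

Local Notation J := (pid_mx (d + r) : 'M[F]_(d + r, n)).
Local Notation PC := (map_mx (@polyC F)).

(* The matrix, in the rows of Nb, of T restricted to the row space of Nb. *)
Definition restrmx := Nb *m B^T *m pinvmx (Nb *m J).

Lemma mulmx_restrmx : restrmx *m (Nb *m J) = Nb *m B^T.
Proof. exact: mulmxKpV. Qed.

Definition redmx := col_mx (PC (Nb *m J)) (PC E *m tcharmx B).

(* The Nb-rows of x J - B^T are (x - restrmx) Nb J, by mulmx_restrmx. *)
Lemma tcharmx_factor :
  PC (col_mx Nb E) *m tcharmx B = block_mx (char_poly_mx restrmx) 0 0 1%:M *m redmx.
Proof.
rewrite map_col_mx mul_col_mx mul_block_col !mul0mx !mul1mx addr0 add0r.
congr col_mx; rewrite /tcharmx /char_poly_mx mulmxBr mulmxBl -scalemxAr mul_scalar_mx.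
by rewrite -!map_mxM mulmx_restrmx.
Qed.

Lemma det_colsub_tcharmx (f : 'I_(d + r) -> 'I_n) :
  (\det (col_mx Nb E))%:P * \det (colsub f (tcharmx B)) =
  char_poly restrmx * \det (colsub f redmx).
Proof.
have := congr1 (fun M => \det (colsub f M)) tcharmx_factor.
by rewrite /= -!mulmx_colsub !det_mulmx det_ublock det1 mulr1 det_map_mx.
Qed.

End StableBlock.

Lemma det_mxsub_charmx (F : finFieldType) n k (B : 'M[F]_(n, k))
    (f : {ffun 'I_k -> 'I_n}) (g : {ffun 'I_k -> 'I_k}) :
  incr g -> \det (mxsub f g (charmx B)) = \det (colsub f (tcharmx B)).
Proof.
move=> incr_g; rewrite -tr_charmx -det_tr; congr (\det _).
by apply/matrixP=> i j; rewrite !mxE incr_ord_id.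
Qed.

Lemma minors_gcd_charmx_neq0 (F : finFieldType) n k (B : 'M[F]_(n, k)) :
  (k <= n)%N -> minors_gcd (charmx B) k != 0.
Proof.
move=> le_kn; pose f := [ffun i : 'I_k => widen_ord le_kn i]; pose g := [ffun i : 'I_k => i].
have incr_f : incr f by apply/incrP=> a b; rewrite !ffunE.
have incr_g : incr g by apply/incrP=> a b; rewrite !ffunE.
apply: contraTneq (minors_gcd_dvd (charmx B) incr_f incr_g) => ->; rewrite dvd0p.
have -> : mxsub f g (charmx B) = char_poly_mx (mxsub f g B).
  apply/matrixP=> i j; rewrite !mxE !ffunE /=.
  have [->|ne_ij] := eqVneq i j; first by rewrite eqxx ltn_ord /= mulr1 mulr1n.
  have -> : (i == j :> nat) = false by apply/negbTE.
  by rewrite /= mulr0 mulr0n.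
exact: monic_neq0 (char_poly_monic _).
Qed.

Section QfpolyCoef0.
Variable F : fieldType.
Variable p : {poly F}.
Hypothesis p_mi : monic_irreducible_poly p.
Local Notation K := {poly %/ p with p_mi}.

Definition qpolyC (t : F) : K := in_qpoly p t%:P.

Lemma in_qpoly_dvdp q : p %| q -> in_qpoly p q = 0 :> K.
Proof.
move=> dvd_pq; apply/val_eqP; rewrite /= mk_monicE //.
by rewrite -Pdiv.IdomainMonic.modpE //; case: p_mi.
Qed.

Lemma map_in_qpolyC m1 m2 (X : 'M[F]_(m1, m2)) :
  map_mx (in_qpoly p) (map_mx polyC X) = map_mx qpolyC X :> 'M[K]_(m1, m2).
Proof. by apply/matrixP=> i j; rewrite !mxE. Qed.

(* The F-linear forms a |-> (c * a)`_0, c in K, separate the points of K. *)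
Definition qcoef0 (c a : K) : F := (c * a : {poly F})`_0.

Lemma qcoef0D c a b : qcoef0 c (a + b) = qcoef0 c a + qcoef0 c b.
Proof. by rewrite /qcoef0 mulrDr poly_of_qpolyD coefD. Qed.

Lemma qcoef0_0 c : qcoef0 c 0 = 0.
Proof. by rewrite /qcoef0 mulr0 coef0. Qed.

Lemma qcoef0M c x a : qcoef0 c (x * a) = qcoef0 (c * x) a.
Proof. by rewrite /qcoef0 mulrA. Qed.

Lemma qcoef0_qpolyC c a t : qcoef0 c (a * qpolyC t) = qcoef0 c a * t.
Proof.
rewrite /qcoef0 /qpolyC -alg_polyC in_qpolyZ in_qpoly1 -!scalerAr mulr1.
by rewrite poly_of_qpolyZ coefZ mulrC.
Qed.

Lemma qcoef0_inv a : a != 0 -> qcoef0 a^-1 a = 1.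
Proof. by move=> nz_a; rewrite /qcoef0 mulVf //= coefC. Qed.

Lemma map_qcoef0_mulmx c m1 m2 m3 (X : 'M[K]_(m1, m2)) (Y : 'M[F]_(m2, m3)) :
  map_mx (qcoef0 c) (X *m map_mx qpolyC Y) = map_mx (qcoef0 c) X *m Y.
Proof.
apply/matrixP=> i j; rewrite !mxE (big_morph (qcoef0 c) (qcoef0D c) (qcoef0_0 c)).
by apply: eq_bigr => l _; rewrite !mxE qcoef0_qpolyC.
Qed.

Lemma map_qcoef0D c m1 m2 (X Y : 'M[K]_(m1, m2)) :
  map_mx (qcoef0 c) (X + Y) = map_mx (qcoef0 c) X + map_mx (qcoef0 c) Y.
Proof. by apply/matrixP=> i j; rewrite !mxE qcoef0D. Qed.

Lemma map_qcoef0Z c x m1 m2 (X : 'M[K]_(m1, m2)) :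
  map_mx (qcoef0 c) (x *: X) = map_mx (qcoef0 (c * x)) X.
Proof. by apply/matrixP=> i j; rewrite !mxE qcoef0M. Qed.

Lemma map_qcoef0_eq0 m1 m2 (X : 'M[K]_(m1, m2)) :
  (forall c, map_mx (qcoef0 c) X = 0) -> X = 0.
Proof.
move=> X0; apply/matrixP=> i j; rewrite mxE; apply: contraTeq isT => nz_Xij.
by have /matrixP/(_ i j) := X0 (X i j)^-1; rewrite !mxE qcoef0_inv // => /eqP; rewrite oner_eq0.
Qed.

End QfpolyCoef0.

Section MaximalStableBlock.
Variable F : finFieldType.
Variables n d r : nat.
Hypothesis le_kn : (d + r <= n)%N.
Variable B : 'M[F]_(n, d + r).
Variables (Nb : 'M[F]_(d, d + r)) (E : 'M[F]_(r, d + r)).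

Local Notation J := (pid_mx (d + r) : 'M[F]_(d + r, n)).
Local Notation Jt := (pid_mx (d + r) : 'M[F]_(n, d + r)).

Hypothesis Nb_stable : (Nb *m B^T <= Nb *m J)%MS.
Hypothesis Nb_max : forall m (Z : 'M[F]_(m, d + r)), (Z *m B^T <= Z *m J)%MS -> (Z <= Nb)%MS.
Hypothesis unit_NbE : col_mx Nb E \in unitmx.

Lemma col_mx_NbE_inj m (x : 'M[F]_(m, d)) (y : 'M[F]_(m, r)) :
  x *m Nb + y *m E = 0 -> x = 0 /\ y = 0.
Proof.
rewrite -mul_row_col => /(congr1 (mulmx^~ (invmx (col_mx Nb E)))).
by rewrite mul0mx mulmxK // => /eqP; rewrite row_mx_eq0 => /andP[/eqP-> /eqP->].
Qed.

Section IrreducibleFactor.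
Variable p : {poly F}.
Hypothesis p_mi : monic_irreducible_poly p.
Local Notation K := {poly %/ p with p_mi}.
Local Notation xi := (in_qpoly p 'X : K).
Local Notation qC := (map_mx (qpolyC p_mi)).
Local Notation qredmx := (map_mx (in_qpoly p) (redmx B Nb E) : 'M[K]_(d + r, n)).

Lemma map_in_qpoly_redmx : qredmx =
  col_mx (qC (Nb *m J)) (qC E *m (xi *: qC J - qC B^T)).
Proof.
rewrite map_col_mx map_in_qpolyC /tcharmx map_mxM map_mxB map_mxZ.
by rewrite !map_in_qpolyC.
Qed.

Lemma redmx_mod_left_kernel :
  (forall f : {ffun 'I_(d + r) -> 'I_n}, incr f -> p %| \det (colsub f (redmx B Nb E))) ->
  exists2 w : 'rV[K]_(d + r), w != 0 & w *m qredmx = 0.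
Proof.
move=> p_dvd_minors.
have : ~~ row_free qredmx.
  apply/negP => /row_free_minor_neq0[f incr_f]; apply/negP; rewrite negbK.
  have -> : colsub f qredmx =
      map_mx (in_qpoly p) (colsub f (redmx B Nb E)) :> 'M[K]_(d + r).
    by apply/matrixP=> i j; rewrite !mxE.
  by rewrite det_map_mx; apply/eqP/in_qpoly_dvdp/p_dvd_minors.
by rewrite -kermx_eq0 => /rowV0Pn[w /sub_kermxP wR0 nz_w]; exists w.
Qed.

(* The F-span of the qcoef0 c u, c in K, is T-stable: multiplying by xi only changes c. *)
Lemma qcoef0_sub_Nb (u : 'rV[K]_(d + r)) (v : 'rV[K]_d) :
  u *m qC B^T = v *m qC (Nb *m J) + xi *: (u *m qC J) ->
  forall c, (map_mx (qcoef0 c) u <= Nb)%MS.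
Proof.
move=> eq_u c; set Z := (Nb + \sum_(a : K) <<map_mx (qcoef0 a) u>>)%MS.
have uZ c' : (map_mx (qcoef0 c') u <= Z)%MS.
  by apply: submx_trans (addsmxSr Nb _); apply: (sumsmx_sup c'); rewrite ?genmxE.
apply: submx_trans (uZ c) (Nb_max _); rewrite addsmxMr addsmx_sub.
apply/andP; split; first exact: submx_trans Nb_stable (submxMr _ (addsmxSl _ _)).
rewrite sumsmxMr_gen; apply/sumsmx_subP => c' _; rewrite genmxE (eqmxMr _ (genmxE _)).
have -> : map_mx (qcoef0 c') u *m B^T =
    (map_mx (qcoef0 c') v *m Nb + map_mx (qcoef0 (c' * xi)) u) *m J.
  by rewrite -map_qcoef0_mulmx eq_u map_qcoef0D map_qcoef0Z !map_qcoef0_mulmx mulmxDl mulmxA.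
by apply/submxMr/addmx_sub; [apply: submx_trans (submxMl _ _) (addsmxSl _ _) | apply: uZ].
Qed.

Lemma redmx_minors_coprime :
  ~ (forall f : {ffun 'I_(d + r) -> 'I_n}, incr f -> p %| \det (colsub f (redmx B Nb E))).
Proof.
move/redmx_mod_left_kernel=> [w]; rewrite map_in_qpoly_redmx -[w]hsubmxK mul_row_col.
set w1 := lsubmx w; set w2 := rsubmx w => nz_w.
rewrite (mulmxA w2) mulmxBr -scalemxAr addrA => /eqP; rewrite subr_eq0.
set u := w2 *m qC E => /eqP eq_u.
have w2_0 : w2 = 0.
  apply: map_qcoef0_eq0 => c; have /submxP[y] := qcoef0_sub_Nb (esym eq_u) c.
  rewrite map_qcoef0_mulmx => eq_y.
  have /col_mx_NbE_inj[_ //] : - y *m Nb + map_mx (qcoef0 c) w2 *m E = 0.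
  by rewrite eq_y mulNmx addNr.
have w1_0 : w1 = 0.
  apply: map_qcoef0_eq0 => c.
  have : map_mx (qcoef0 c) w1 *m Nb *m J = 0.
    move: eq_u; rewrite /u w2_0 !mul0mx scaler0 addr0 => /(congr1 (map_mx (qcoef0 c))).
    by rewrite map_qcoef0_mulmx mulmxA => ->; apply/matrixP=> i j; rewrite !mxE qcoef0_0.
  move/(congr1 (mulmx^~ Jt)); rewrite -!mulmxA (mul_pid_mx1 le_kn) mulmx1 mul0mx => w1Nb0.
  have /col_mx_NbE_inj[// _] : map_mx (qcoef0 c) w1 *m Nb + 0 *m E = 0.
  by rewrite w1Nb0 mul0mx addr0.
by move: nz_w; rewrite w1_0 w2_0 row_mx0 eqxx.
Qed.

End IrreducibleFactor.

Lemma size_minors_gcd_charmx : size (minors_gcd (charmx B) (d + r)) = d.+1.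
Proof.
set g := minors_gcd _ _; set chi := char_poly (restrmx B Nb).
have nz_chi : chi != 0 := monic_neq0 (char_poly_monic _).
have nz_detNbE : \det (col_mx Nb E) != 0 by rewrite -unitfE -unitmxE.
have chi_dvd_g : chi %| g.
  apply: dvdp_minors_gcd => f g' _ incr_g'.
  rewrite det_mxsub_charmx // -(dvdpZr _ _ nz_detNbE) -mul_polyC det_colsub_tcharmx //.
  exact: dvdp_mulIl.
have [q def_g] : exists q, g = q * chi by exists (g %/ chi); rewrite Pdiv.Field.divpK.
have nz_q : q != 0.
  by apply: contraNneq (minors_gcd_charmx_neq0 B le_kn) => q0; rewrite -/g def_g q0 mul0r.
have q_dvd_minors f : incr f -> q %| \det (colsub f (redmx B Nb E)).
  move=> incr_f; rewrite -(dvdp_mul2r _ _ nz_chi) [X in _ %| X]mulrC.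
  rewrite -det_colsub_tcharmx //.
  have incr_id : incr [ffun i : 'I_(d + r) => i] by apply/incrP=> a b; rewrite !ffunE.
  by rewrite mul_polyC dvdpZr // -def_g -(det_mxsub_charmx B _ incr_id) minors_gcd_dvd.
have size_q : size q = 1%N.
  apply/eqP; rewrite eqn_leq size_poly_gt0 nz_q andbT leqNgt; apply/negP => q_gt1.
  have [p p_mi p_dvd_q] := monic_irreducible_dvdp q_gt1.
  apply: (redmx_minors_coprime p_mi) => f incr_f.
  exact: dvdp_trans p_dvd_q (q_dvd_minors f incr_f).
by rewrite def_g size_mul // size_q add1n size_char_poly.
Qed.

End MaximalStableBlock.

Lemma size_minors_gcd_charmx_maxInv (F : finFieldType) n k (B : 'M[F]_(n, k)) :
  (k <= n)%N -> size (minors_gcd (charmx B) k) = (\rank (maxInv B)).+1.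
Proof.
move=> le_kn; rewrite -(mxrank_maxInv_coord le_kn).
have N_stable := maxInv_coord_stable le_kn B; have N_max := @maxInv_coord_max _ _ _ le_kn B.
move: (maxInv_coord B) N_stable N_max => N N_stable N_max.
have full_NNC : row_full (col_mx (row_base N) (row_base N^C%MS)).
  rewrite /row_full -addsmxE (adds_eqmx (eq_row_base _) (eq_row_base _)).
  exact: addsmx_compl_full.
have def_k : k = (\rank N + \rank N^C%MS)%N by rewrite mxrank_compl subnKC ?rank_leq_col.
move: (row_base N) (row_base N^C%MS) (eq_row_base N) full_NNC.
move: (\rank N) (\rank N^C%MS) def_k => d r def_k; subst k => Nb E eq_NbN full_NbE.
rewrite (size_minors_gcd_charmx le_kn (Nb := Nb) (E := E)) //.
- by rewrite !(eqmxMr _ eq_NbN).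
- by move=> m Z /N_max; rewrite eq_NbN.
- by rewrite -row_full_unit.
Qed.

Theorem mainTheorem1 (F : finFieldType) (n k : nat) (hk : (0 < k)%N) (hkn : (k <= n)%N)
  (B : 'M[F]_(n, k)) :
  \rank (maxInv B) =
  (size (\prod_(1 <= i < k.+1) invfact (charmx B) i)).-1.
Proof.
pose P i := detdiv (charmx B) i.
have P_dvd i : (0 < i <= k)%N -> P i.-1 %| P i.
  move=> /andP[i_gt0 _]; rewrite !(eqp_dvdl _ (detdiv_eqp _ _)) !(eqp_dvdr _ (detdiv_eqp _ _)).
  by rewrite -{2}(prednK i_gt0) minors_gcd_dvdS.
have P0 : P 0%N %= 1 := eqp_trans (detdiv_eqp _ _) (minors_gcd0 _).
have prod_eqp : \prod_(1 <= i < k.+1) invfact (charmx B) i %= minors_gcd (charmx B) k.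
  apply: eqp_trans (detdiv_eqp _ _); rewrite -/(P k) -(prod_divp_telescope P_dvd).
  by rewrite eqp_sym -[X in _ %= X]mulr1 eqp_mull.
by rewrite (eqp_size prod_eqp) size_minors_gcd_charmx_maxInv.
Qed.
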